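(* Let $N\in\mathbb{N}$, $N\geqslant2$, and let $f:[0,1]\times\mathbb{R}\to\mathbb{R}$ be such that there exist positive constants $A,B$ with $A<1$ and $|f(t,x)|\leqslant A|x|+B$ for all $t\in[0,1]$, $x\in\mathbb{R}$. Then the functional $\mathbb{E}_N\ni x\mapsto\|D_Nx\|_N$ is coercive with respect to $\|\cdot\|_{\mathbb{E}_N}$, i.e. $\|D_Nx\|_N\to\infty$ as $\|x\|_{\mathbb{E}_N}\to\infty$.
   Context: $\mathbb{E}_N$ is the space of $x:\{0,\dots,N\}\to\mathbb{R}$ with $x(0)=x(N)=0$. $\Delta x(k-1)=x(k)-x(k-1)$, $\Delta^2x(k-1)=x(k+1)-2x(k)+x(k-1)$. $\|x\|_N=(\sum_{i=1}^{N-1}|x(i)|^2)^{1/2}$, $\|x\|_{\mathbb{E}_N}=(\sum_{i=1}^{N-1}|\Delta^2x(i-1)|^2)^{1/2}$. $(D_Nx)(k)=\Delta^2x(k-1)-\frac{1}{N^2}f(\frac kN,x(k))$ for $k=1,\dots,N-1$, $(D_Nx)(0)=(D_Nx)(N)=0$. *)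

From Stdlib Require Import Reals List.
Import ListNotations.
Open Scope R_scope.

Definition sum1 (N : nat) (g : nat -> R) : R :=
  fold_right Rplus 0 (map g (seq 1 (N - 1))).

(* x belongs to E_N : x : {0..N} -> R with x 0 = x N = 0
   (values of x outside {0..N} are irrelevant). *)
Definition in_EN (N : nat) (x : nat -> R) : Prop := x 0%nat = 0 /\ x N = 0.

(* Delta^2 x (k-1) = x(k+1) - 2 x(k) + x(k-1) *)
Definition delta2 (x : nat -> R) (k : nat) : R :=
  x (S k) - 2 * x k + x (Nat.pred k).

Definition normN (N : nat) (x : nat -> R) : R :=
  sqrt (sum1 N (fun i => Rsqr (Rabs (x i)))).

Definition normEN (N : nat) (x : nat -> R) : R :=
  sqrt (sum1 N (fun i => Rsqr (Rabs (delta2 x i)))).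

Definition DN (N : nat) (f : R -> R -> R) (x : nat -> R) (k : nat) : R :=
  if ((1 <=? k)%nat && (k <=? N - 1)%nat)%bool
  then delta2 x k - / (INR N)^2 * f (INR k / INR N) (x k)
  else 0.

From Stdlib Require Import Reals Lra Lia Psatz List.
Open Scope R_scope.

(* Write [d i = Δ²x(i-1)] and [g i = f(i/N, x i) / N²], so that [D_N x = d - g] on
   [1..N-1]. The increments [x j - x (j-1)], [1 <= j <= N], sum to [x N - x 0 = 0]
   and vary by at most [‖d‖₁]; hence each of them, and therefore [|x k| / k], is at
   most [‖d‖₁ <= √(N-1) ‖x‖_{E_N}] (Cauchy-Schwarz). The growth condition on [f] then
   gives [‖g‖₂ <= A ‖x‖_{E_N} + B], the powers of [N] cancelling against the [1/N²],
   and the reverse triangle inequality yields [‖D_N x‖_N >= (1 - A) ‖x‖_{E_N} - B]. *)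

Fixpoint sum_1n (g : nat -> R) (n : nat) : R :=
  match n with O => 0 | S m => sum_1n g m + g (S m) end.

Lemma sum1_eq N g : sum1 N g = sum_1n g (N - 1).
Proof.
  unfold sum1. generalize (N - 1)%nat as n. induction n as [|n IH]; [reflexivity|].
  rewrite seq_S, map_app, fold_right_app. simpl.
  replace (1 + n)%nat with (S n) by lia.
  rewrite <- IH. generalize (map g (seq 1 n)).
  induction l as [|a l IHl]; simpl; [ring | rewrite IHl; ring].
Qed.

Lemma sum_1n_ext g h n :
  (forall i, (1 <= i <= n)%nat -> g i = h i) -> sum_1n g n = sum_1n h n.
Proof.
  induction n as [|n IH]; intros H; simpl; [reflexivity|].
  rewrite IH, H; [reflexivity | lia | intros; apply H; lia].
Qed.

Lemma sum_1n_le g h n :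
  (forall i, (1 <= i <= n)%nat -> g i <= h i) -> sum_1n g n <= sum_1n h n.
Proof.
  induction n as [|n IH]; intros H; simpl; [lra|].
  apply Rplus_le_compat; [apply IH; intros; apply H|apply H]; lia.
Qed.

Lemma sum_1n_const c n : sum_1n (fun _ => c) n = INR n * c.
Proof. induction n as [|n IH]; simpl sum_1n; [simpl; ring | rewrite IH, S_INR; ring]. Qed.

Lemma sum_1n_nonneg g n : (forall i, (1 <= i <= n)%nat -> 0 <= g i) -> 0 <= sum_1n g n.
Proof.
  intros H. replace 0 with (sum_1n (fun _ => 0) n) by (rewrite sum_1n_const; ring).
  now apply sum_1n_le.
Qed.

Lemma sum_1n_mono g m n : (forall i, 0 <= g i) -> (m <= n)%nat -> sum_1n g m <= sum_1n g n.
Proof. intros Hg Hmn. induction Hmn; simpl; [lra | specialize (Hg (S m0)); lra]. Qed.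

Lemma sum_1n_add g h n : sum_1n (fun i => g i + h i) n = sum_1n g n + sum_1n h n.
Proof. induction n as [|n IH]; simpl; [ring | rewrite IH; ring]. Qed.

Lemma sum_1n_scal c g n : sum_1n (fun i => c * g i) n = c * sum_1n g n.
Proof. induction n as [|n IH]; simpl; [ring | rewrite IH; ring]. Qed.

Lemma sum_1n_telescope y n : sum_1n (fun i => y i - y (pred i)) n = y n - y 0%nat.
Proof. induction n as [|n IH]; simpl; [ring | rewrite IH; ring]. Qed.

Lemma two_mul_le_of_sqr_le s P Q u v : 0 <= P -> 0 <= Q -> Rsqr s <= P * Q ->
  2 * s * u * v <= P * Rsqr v + Q * Rsqr u.
Proof.
  intros HP HQ Hs.
  assert (Hsq : Rsqr (2 * s * u * v) <= Rsqr (P * Rsqr v + Q * Rsqr u)).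
  { replace (Rsqr (P * Rsqr v + Q * Rsqr u))
      with (Rsqr (P * Rsqr v - Q * Rsqr u) + 4 * Rsqr (u * v) * (P * Q))
      by (unfold Rsqr; ring).
    replace (Rsqr (2 * s * u * v)) with (4 * Rsqr (u * v) * Rsqr s) by (unfold Rsqr; ring).
    pose proof (Rle_0_sqr (P * Rsqr v - Q * Rsqr u)).
    pose proof (Rle_0_sqr (u * v)). nra. }
  apply Rsqr_le_abs_0 in Hsq.
  rewrite (Rabs_right (_ + _)) in Hsq by (apply Rle_ge, Rplus_le_le_0_compat;
    apply Rmult_le_pos; auto; apply Rle_0_sqr).
  eapply Rle_trans; [apply Rle_abs | exact Hsq].
Qed.

Lemma sum_1n_Cauchy_Schwarz a b n :
  Rsqr (sum_1n (fun i => a i * b i) n) <=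
  sum_1n (fun i => Rsqr (a i)) n * sum_1n (fun i => Rsqr (b i)) n.
Proof.
  induction n as [|n IH]; simpl; [unfold Rsqr; lra|].
  set (s := sum_1n (fun i => a i * b i) n) in *.
  set (P := sum_1n (fun i => Rsqr (a i)) n) in *.
  set (Q := sum_1n (fun i => Rsqr (b i)) n) in *.
  assert (HP : 0 <= P) by (apply sum_1n_nonneg; intros; apply Rle_0_sqr).
  assert (HQ : 0 <= Q) by (apply sum_1n_nonneg; intros; apply Rle_0_sqr).
  pose proof (two_mul_le_of_sqr_le s P Q (a (S n)) (b (S n)) HP HQ IH).
  unfold Rsqr in *. nra.
Qed.

Definition norm2 (n : nat) (a : nat -> R) : R := sqrt (sum_1n (fun i => Rsqr (a i)) n).

Lemma norm2_ext a b n :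
  (forall i, (1 <= i <= n)%nat -> a i = b i) -> norm2 n a = norm2 n b.
Proof. intros H. unfold norm2. f_equal. apply sum_1n_ext. intros i Hi. now rewrite H. Qed.

Lemma sqr_norm2 a n : Rsqr (norm2 n a) = sum_1n (fun i => Rsqr (a i)) n.
Proof. apply Rsqr_sqrt, sum_1n_nonneg. intros; apply Rle_0_sqr. Qed.

Lemma norm2_nonneg a n : 0 <= norm2 n a.
Proof. apply sqrt_pos. Qed.

Lemma sum_1n_mul_le_norm2 a b n : sum_1n (fun i => a i * b i) n <= norm2 n a * norm2 n b.
Proof.
  apply Rsqr_incr_0_var; [|apply Rmult_le_pos; apply norm2_nonneg].
  rewrite Rsqr_mult, !sqr_norm2. apply sum_1n_Cauchy_Schwarz.
Qed.

Lemma norm2_add_le a b n : norm2 n (fun i => a i + b i) <= norm2 n a + norm2 n b.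
Proof.
  apply Rsqr_incr_0_var; [|pose proof (norm2_nonneg a n); pose proof (norm2_nonneg b n); lra].
  rewrite sqr_norm2.
  rewrite (sum_1n_ext _ (fun i => (Rsqr (a i) + 2 * (a i * b i)) + Rsqr (b i)))
    by (intros; unfold Rsqr; ring).
  rewrite !sum_1n_add, sum_1n_scal.
  pose proof (sum_1n_mul_le_norm2 a b n).
  replace (Rsqr (norm2 n a + norm2 n b))
    with (Rsqr (norm2 n a) + 2 * (norm2 n a * norm2 n b) + Rsqr (norm2 n b))
    by (unfold Rsqr; ring).
  rewrite !sqr_norm2. lra.
Qed.

Lemma norm2_sub_ge a b n : norm2 n a - norm2 n b <= norm2 n (fun i => a i - b i).
Proof.
  pose proof (norm2_add_le (fun i => a i - b i) b n) as H.
  rewrite (norm2_ext (fun i => a i - b i + b i) a) in H by (intros; ring). lra.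
Qed.

Lemma sum_1n_abs_le_norm2 a n : sum_1n (fun i => Rabs (a i)) n <= sqrt (INR n) * norm2 n a.
Proof.
  pose proof (sum_1n_mul_le_norm2 (fun i => Rabs (a i)) (fun _ => 1) n) as H.
  rewrite (sum_1n_ext _ (fun i => Rabs (a i))) in H by (intros; ring).
  replace (norm2 n (fun i => Rabs (a i))) with (norm2 n a) in H
    by (unfold norm2; f_equal; apply sum_1n_ext; intros; apply Rsqr_abs).
  unfold norm2 at 2 in H. rewrite sum_1n_const, Rsqr_1, Rmult_1_r in H. lra.
Qed.

Lemma norm2_le_bound a c n :
  0 <= c -> (forall i, (1 <= i <= n)%nat -> Rabs (a i) <= c) -> norm2 n a <= sqrt (INR n) * c.
Proof.
  intros Hc Ha. rewrite <- (sqrt_Rsqr c Hc), <- sqrt_mult by (auto using pos_INR, Rle_0_sqr).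
  apply sqrt_le_1_alt. rewrite <- sum_1n_const. apply sum_1n_le. intros i Hi.
  rewrite (Rsqr_abs (a i)). apply Rsqr_incr_1; auto using Rabs_pos.
Qed.

Lemma Rabs_sub_le_variation (y : nat -> R) j k :
  Rabs (y (S (j + k)) - y (S j)) <=
  sum_1n (fun i => Rabs (y (S i) - y i)) (j + k) - sum_1n (fun i => Rabs (y (S i) - y i)) j.
Proof.
  induction k as [|k IH].
  - rewrite Nat.add_0_r. unfold Rminus. rewrite Rplus_opp_r, Rabs_R0, Rplus_opp_r. lra.
  - rewrite Nat.add_succ_r. simpl sum_1n.
    replace (y (S (S (j + k))) - y (S j))
      with ((y (S (S (j + k))) - y (S (j + k))) + (y (S (j + k)) - y (S j))) by ring.
    eapply Rle_trans; [apply Rabs_triang | lra].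
Qed.

Lemma Rabs_sub_le_total_variation (y : nat -> R) n j m :
  (1 <= j <= S n)%nat -> (1 <= m <= S n)%nat ->
  Rabs (y m - y j) <= sum_1n (fun i => Rabs (y (S i) - y i)) n.
Proof.
  enough (Hord : forall j m, (1 <= j <= m)%nat -> (m <= S n)%nat ->
            Rabs (y m - y j) <= sum_1n (fun i => Rabs (y (S i) - y i)) n)
    by (intros Hj Hm; destruct (Nat.le_ge_cases j m);
        [|rewrite Rabs_minus_sym]; apply Hord; lia).
  clear j m. intros j m Hj Hm. destruct j as [|j]; [lia|].
  replace m with (S (j + (m - S j))) by lia.
  eapply Rle_trans; [apply Rabs_sub_le_variation|].
  assert (Hnn : forall i, 0 <= Rabs (y (S i) - y i)) by (intros; apply Rabs_pos).
  pose proof (sum_1n_mono _ (j + (m - S j)) n Hnn ltac:(lia)).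
  pose proof (sum_1n_mono _ 0 j Hnn ltac:(lia)). simpl sum_1n in *. lra.
Qed.

Lemma Rabs_le_of_sum_zero (y : nat -> R) c N j :
  (1 <= N)%nat -> sum_1n y N = 0 ->
  (forall m, (1 <= m <= N)%nat -> Rabs (y m - y j) <= c) -> Rabs (y j) <= c.
Proof.
  intros HN Hsum Hosc.
  assert (Hlo : sum_1n (fun _ => y j - c) N <= sum_1n y N).
  { apply sum_1n_le. intros m Hm. specialize (Hosc m Hm).
    pose proof (Rle_abs (y m - y j)); pose proof (Rle_abs (- (y m - y j))).
    rewrite Rabs_Ropp in *. lra. }
  assert (Hhi : sum_1n y N <= sum_1n (fun _ => y j + c) N).
  { apply sum_1n_le. intros m Hm. specialize (Hosc m Hm).
    pose proof (Rle_abs (y m - y j)); pose proof (Rle_abs (- (y m - y j))).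
    rewrite Rabs_Ropp in *. lra. }
  rewrite !sum_1n_const, Hsum in *.
  assert (0 < INR N) by (apply lt_0_INR; lia).
  apply Rabs_le. split; nra.
Qed.

Lemma Rabs_increment_le x n j : in_EN (S n) x -> (1 <= j <= S n)%nat ->
  Rabs (x j - x (pred j)) <= sum_1n (fun i => Rabs (delta2 x i)) n.
Proof.
  intros [H0 HN] Hj. set (y := fun j => x j - x (pred j)).
  apply (Rabs_le_of_sum_zero y _ (S n)); [lia | |].
  - unfold y. rewrite sum_1n_telescope, H0, HN. ring.
  - intros m Hm.
    rewrite (sum_1n_ext _ (fun i => Rabs (y (S i) - y i)))
      by (intros; unfold y, delta2; simpl; f_equal; ring).
    apply Rabs_sub_le_total_variation; lia.
Qed.

Lemma Rabs_le_mul_variation x n k : in_EN (S n) x -> (k <= S n)%nat ->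
  Rabs (x k) <= INR k * sum_1n (fun i => Rabs (delta2 x i)) n.
Proof.
  intros HE. induction k as [|k IH]; intros Hk.
  - destruct HE as [H0 _]. rewrite H0, Rabs_R0. simpl. lra.
  - replace (x (S k)) with (x k + (x (S k) - x (pred (S k)))) by (simpl; ring).
    eapply Rle_trans; [apply Rabs_triang|].
    pose proof (IH ltac:(lia)). pose proof (Rabs_increment_le x n (S k) HE ltac:(lia)).
    rewrite S_INR. lra.
Qed.

Definition forcing (N : nat) (f : R -> R -> R) (x : nat -> R) (i : nat) : R :=
  / INR N ^ 2 * f (INR i / INR N) (x i).

Lemma normEN_eq n x : normEN (S n) x = norm2 n (delta2 x).
Proof.
  unfold normEN, norm2. rewrite sum1_eq. replace (S n - 1)%nat with n by lia.
  f_equal. apply sum_1n_ext. intros. symmetry. apply Rsqr_abs.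
Qed.

Lemma normN_DN n f x :
  normN (S n) (DN (S n) f x) = norm2 n (fun i => delta2 x i - forcing (S n) f x i).
Proof.
  unfold normN, norm2. rewrite sum1_eq. replace (S n - 1)%nat with n by lia.
  f_equal. apply sum_1n_ext. intros i Hi. unfold DN.
  replace ((1 <=? i)%nat && (i <=? S n - 1)%nat)%bool with true
    by (symmetry; apply andb_true_intro; split; apply Nat.leb_le; lia).
  symmetry. apply Rsqr_abs.
Qed.

Lemma norm2_forcing_le n f A B x :
  0 <= A -> 0 <= B -> (forall t y, 0 <= t <= 1 -> Rabs (f t y) <= A * Rabs y + B) ->
  in_EN (S n) x -> norm2 n (forcing (S n) f x) <= A * norm2 n (delta2 x) + B.
Proof.
  intros HA HB Hf HE.
  set (E := norm2 n (delta2 x)). set (r := sqrt (INR n)).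
  assert (HE0 : 0 <= E) by apply norm2_nonneg.
  assert (Hr : r * r = INR n) by (apply sqrt_sqrt, pos_INR).
  assert (Hr0 : 0 <= r) by apply sqrt_pos.
  assert (HN : INR (S n) = INR n + 1) by apply S_INR.
  assert (Hn : 0 <= INR n) by apply pos_INR.
  assert (HN2 : 0 < INR (S n) ^ 2) by nra.
  set (c := (A * INR n * (r * E) + B) / INR (S n) ^ 2).
  assert (Hc : forall i, (1 <= i <= n)%nat -> Rabs (forcing (S n) f x i) <= c).
  { intros i Hi.
    assert (Ht : 0 <= INR i / INR (S n) <= 1).
    { split; [apply Rmult_le_pos; [apply pos_INR | apply Rlt_le, Rinv_0_lt_compat; lra]|].
      apply (Rmult_le_reg_r (INR (S n))); [lra|]. unfold Rdiv.
      rewrite Rmult_assoc, Rinv_l, Rmult_1_r, Rmult_1_l by lra. apply le_INR; lia. }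
    assert (Hx : Rabs (x i) <= INR n * (r * E)).
    { eapply Rle_trans; [apply (Rabs_le_mul_variation x n i HE); lia|].
      apply Rmult_le_compat; [apply pos_INR | | apply le_INR; lia | apply sum_1n_abs_le_norm2].
      apply sum_1n_nonneg. intros; apply Rabs_pos. }
    unfold forcing, c, Rdiv. rewrite Rabs_mult, Rabs_inv, (Rabs_right (INR (S n) ^ 2)) by lra.
    rewrite Rmult_comm. apply Rmult_le_compat_r; [apply Rlt_le, Rinv_0_lt_compat; lra|].
    eapply Rle_trans; [apply Hf, Ht|]. rewrite Rmult_assoc.
    apply Rplus_le_compat_r, Rmult_le_compat_l; assumption. }
  assert (Hc0 : 0 <= c).
  { apply Rmult_le_pos; [|apply Rlt_le, Rinv_0_lt_compat; lra].
    pose proof (Rmult_le_pos _ _ Hr0 HE0). pose proof (Rmult_le_pos _ _ HA Hn). nra. }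
  eapply Rle_trans; [apply norm2_le_bound; [exact Hc0 | exact Hc]|]. fold r.
  (* [r c = (A n² E + r B) / (n+1)²], and both [n²] and [r <= n + 1] are at most [(n+1)²] *)
  apply (Rmult_le_reg_r (INR (S n) ^ 2)); [exact HN2|]. unfold c, Rdiv.
  rewrite Rmult_assoc, (Rmult_assoc _ (/ _)), Rinv_l, Rmult_1_r by lra.
  replace (r * (A * INR n * (r * E) + B)) with (A * E * (INR n * INR n) + B * r)
    by (rewrite <- Hr; ring).
  rewrite HN, Rmult_plus_distr_r.
  apply Rplus_le_compat; apply Rmult_le_compat_l; nra.
Qed.

Theorem lemma11 (N : nat) (f : R -> R -> R) :
  (2 <= N)%nat ->
  (exists A B : R, 0 < A /\ A < 1 /\ 0 < B /\
     forall t x : R, 0 <= t <= 1 -> Rabs (f t x) <= A * Rabs x + B) ->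
  forall M : R, exists K : R, forall x : nat -> R,
    in_EN N x -> K <= normEN N x -> M <= normN N (DN N f x).
Proof.
  intros HN [A [B [HA0 [HA1 [HB Hf]]]]] M.
  destruct N as [|n]; [lia|].
  exists ((M + B) / (1 - A)). intros x HE HK.
  rewrite normEN_eq in HK. rewrite normN_DN.
  assert (Hcoer : M + B <= (1 - A) * norm2 n (delta2 x)).
  { apply (Rmult_le_reg_r (/ (1 - A))); [apply Rinv_0_lt_compat; lra|].
    replace ((1 - A) * norm2 n (delta2 x) * / (1 - A)) with (norm2 n (delta2 x))
      by (field; lra).
    exact HK. }
  pose proof (norm2_sub_ge (delta2 x) (forcing (S n) f x) n).
  pose proof (norm2_forcing_le n f A B x ltac:(lra) ltac:(lra) Hf HE).
  lra.
Qed.
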